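(* Let $N\ge1$, $n\ge1$, let $b$ be a positive integer, and let $\omega_*$, $\langle\cdot,\cdot\rangle_{b,N}$ and $\langle\!\langle\cdot,\cdot\rangle\!\rangle_{b,N}$ be as in the context. Then for all $f,g\in F_{N,n}$, $$\langle f,g\rangle_{b,N}=\langle\!\langle\omega_*(f),\omega_*(g)\rangle\!\rangle_{b,N}.$$
   Context: For $k\in\mathbb Z$, $\underline{k}\in\{1,\dots,N\}$, $\overline{k}\in\mathbb Z$ unique with $k=\underline{k}-N\overline{k}$. $V=\mathbb C^N$ with basis $v_1,\dots,v_N$. $K_{ij}$ swaps $z_i,z_j$, $P_{ij}$ swaps factors $i,j$ of $V^{\otimes n}$; $F_{N,n}=\{f\in\mathbb C[z_1^{\pm1},\dots,z_n^{\pm1}]\otimes V^{\otimes n}:K_{ij}f=-P_{ij}f\}$ with basis $\hat u_k=\sum_{w\in S_n}\mathrm{sign}(w)z_1^{\overline{k_{w(1)}}}\cdots z_n^{\overline{k_{w(n)}}}\otimes v_{\underline{k_{w(1)}}}\otimes\cdots\otimes v_{\underline{k_{w(n)}}}$, $k_1>\dots>k_n$. $\hat a_k=\sum_{w\in S_n}\mathrm{sign}(w)x_{w(1)}^{k_1}\cdots x_{w(n)}^{k_n}$; $\omega_*$ is the linear isomorphism from $F_{N,n}$ onto skew-symmetric Laurent polynomials in $x$ with $\omega_*(\hat u_k)=\hat a_k$ ($k_1>\dots>k_n$). Scalar products. On $\mathbb C[z^{\pm1}]\otimes V^{\otimes n}$: $\langle f\otimes u,g\otimes v\rangle'_{b,N}=\frac1{n!}\prod_j\oint\frac{dw_j}{2\pi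 iw_j}\prod_{i\ne j}(1-w_iw_j^{-1})^b\,\bar f(w^{-1})g(w)\cdot\langle u,v\rangle_N$ (unit circles; $\bar f$ has conjugated coefficients; $\langle\cdot,\cdot\rangle_N$ makes the tensor monomials $v_{a_1}\otimes\cdots\otimes v_{a_n}$ orthonormal), extended sesquilinearly; $\langle\cdot,\cdot\rangle_{b,N}$ is its restriction to $F_{N,n}$. For Laurent polynomials $f,g$ in $x$: $f^*(x)=\bar f(x_1^{-1},\dots,x_n^{-1})$, $[h]_1$ is the constant term, $\nabla(b,N)=\prod_{1\le i\ne j\le n}(1-x_i^Nx_j^{-N})^b$, and $\langle\!\langle f,g\rangle\!\rangle_{b,N}=\frac1{n!}[\nabla(b,N)f^*g]_1$. *)

From HB Require Import structures.
From mathcomp Require Import all_boot all_order all_algebra all_fingroup.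
From mathcomp Require Import finmap.
From mathcomp Require Import monalg.

Set Implicit Arguments.
Unset Strict Implicit.
Unset Printing Implicit Defensive.

Import Order.TTheory GRing.Theory Num.Theory.
Local Open Scope ring_scope.

Section Defs.
Variable C : numClosedFieldType.

Definition Exps (n : nat) := {ffun 'I_n -> int}.
Definition LP (n : nat) := {malg C[Exps n]}.

Definition lmul n (p q : LP n) : LP n :=
  \sum_(u <- msupp p) \sum_(v <- msupp q) << p@_u * q@_v *g (u + v) >>.
Definition lone n : LP n := << (0 : Exps n) >>.
Definition lpow n (p : LP n) (b : nat) : LP n := iter b (lmul p) (lone n).

Definition lstar n (p : LP n) : LP n :=
  \sum_(u <- msupp p) << (p@_u)^* *g (- u) >>.

Definition cterm n (p : LP n) : C := p@_(0 : Exps n).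

Definition eij n (N : nat) (i j : 'I_n) : Exps n :=
  [ffun k => (N%:Z * ((k == i)%:Z - (k == j)%:Z))%R].

Definition nabla n (b N : nat) : LP n :=
  \big[@lmul n/lone n]_(i : 'I_n) \big[@lmul n/lone n]_(j : 'I_n | i != j)
     lpow (lone n - << eij N i j >>) b.

Definition sp_x n (b N : nat) (f g : LP n) : C :=
  (n`!%:R)^-1 * cterm (lmul (lmul (nabla n b N) (lstar f)) g).

(* Normalized torus integral prod_j oint dw_j/(2 pi i w_j) of a Laurent
   polynomial over the unit circles: the constant term. *)
Definition torus_int n (p : LP n) : C := cterm p.

(* ---- C[z^{+-1}] (x) V^{(x)n}, V = C^N with basis v_1..v_N, where
   v_{a+1} is indexed by a : 'I_N; basis z^m (x) v_{a_1} (x)...(x) v_{a_n}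
   indexed by (m, a). ---- *)
Definition TIdx (N n : nat) := (Exps n * {ffun 'I_n -> 'I_N})%type.
Definition TV (N n : nat) := {malg C[TIdx N n]}.

Definition Kop N n (i j : 'I_n) (f : TV N n) : TV N n :=
  \sum_(k <- msupp f)
     << f@_k *g ([ffun l => k.1 (tperm i j l)], k.2) >>.
Definition Pop N n (i j : 'I_n) (f : TV N n) : TV N n :=
  \sum_(k <- msupp f)
     << f@_k *g (k.1, [ffun l => k.2 (tperm i j l)]) >>.

Definition inF N n (f : TV N n) : Prop :=
  forall i j : 'I_n, i != j -> Kop i j f = - Pop i j f.

Definition tcomp N n (f : TV N n) (a : {ffun 'I_n -> 'I_N}) : LP n :=
  \sum_(k <- msupp f | k.2 == a) << f@_k *g k.1 >>.

(* <f,g>'_{b,N}: sesquilinear extension of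
   <f (x) u, g (x) v>' = 1/n! oint prod_{i<>j}(1-w_i/w_j)^b \bar f(w^-1) g(w) <u,v>_N,
   with <.,.>_N making the v_a orthonormal. *)
Definition sp_z N n (b : nat) (f g : TV N n) : C :=
  (n`!%:R)^-1 * \sum_(a : {ffun 'I_n -> 'I_N})
     torus_int (lmul (lmul (nabla n b 1) (lstar (tcomp f a))) (tcomp g a)).

Lemma under_lt (N : nat) (hN : (0 < N)%N) (k : int) :
  (`|((k - 1) %% N%:Z)%Z|%N < N)%N.
Proof.
have hN' : (N%:Z != 0) by rewrite eqz_nat -lt0n.
have h0 := modz_ge0 (k - 1) hN'.
have h1 : ((k - 1) %% N%:Z)%Z < N%:Z.
  by rewrite -[X in _ < X]gtr0_norm ?ltz_mod // ltz_nat.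
rewrite -ltz_nat gez0_abs //.
Qed.

(* underline{k} = uidx k + 1, uidx k : 'I_N *)
Definition uidx (N : nat) (hN : (0 < N)%N) (k : int) : 'I_N :=
  Ordinal (under_lt hN k).
(* overline{k}, so that k = underline{k} - N * overline{k} *)
Definition over (N : nat) (k : int) : int := - ((k - 1) %/ N%:Z)%Z.

Definition strictly_decr n (k : {ffun 'I_n -> int}) : Prop :=
  forall i j : 'I_n, (i < j)%N -> k j < k i.

Definition uhat N n (hN : (0 < N)%N) (k : {ffun 'I_n -> int}) : TV N n :=
  \sum_(w : 'S_n) ((-1) ^+ odd_perm w) *:
     << ([ffun i => over N (k (w i))], [ffun i => uidx hN (k (w i))]) >>.

Definition ahat n (k : {ffun 'I_n -> int}) : LP n :=
  \sum_(w : 'S_n) ((-1) ^+ odd_perm w) *: << [ffun j => k ((w^-1)%g j)] >>.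

End Defs.

(* Let [omega_star] be the linear map sending [z^m (x) v_(a_1+1) (x) ... (x) v_(a_n+1)]
   to [x^(rho (m, a))], where [rho (m, a)_i = a_i + 1 - N m_i]; [rho] is a bijection
   onto [Z^n], inverse to [k |-> (overline k, underline k - 1)].  It maps [uhat k] to
   [ahat k] and [F_(N,n)] onto the alternating Laurent polynomials.  An alternating [p]
   equals the sum of the [p_k ahat k] over strictly decreasing [k] (an exponent [mu] with
   [p_mu <> 0] has distinct entries, hence exactly one decreasing rearrangement), so the
   hypotheses on [omega] force [omega = omega_star] on [F_(N,n)].
   For [omega_star] the identity holds for all [f] and [g]: both scalar products are
   double sums over the monomials [(m, a)] of [f] and [(m', a')] of [g], with kernel
   [nabla(b,N)] at [rho (m, a) - rho (m', a')] on one side and [nabla(b,1)] at [m - m']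
   if [a = a'] (and [0] otherwise) on the other.  As [nabla(b,N)] is [nabla(b,1)] at
   [x^N] and [0 <= a_i, a'_i < N], the first kernel vanishes unless [a = a'] and is then
   the coefficient of [nabla(b,1)] at [m' - m], which is the second kernel because
   [nabla] is invariant under [x |-> x^-1]. *)

From Pilot Require Import Defs.
From HB Require Import structures.
From mathcomp Require Import all_boot all_order all_algebra all_fingroup.
From mathcomp Require Import finmap monalg.
From mathcomp Require Import zify ring.
Import Order.TTheory GRing.Theory Num.Theory.
Set Implicit Arguments.
Unset Strict Implicit.
Unset Printing Implicit Defensive.
Local Open Scope ring_scope.

Section Reindex.
Variables (R : nzRingType) (K K' : choiceType).
Implicit Types (g : {malg R[K]}) (c : R) (k : K).

Lemma sum_msupp_pred1 (V : nmodType) g (F : K -> V) k0 :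
  (forall k, g@_k = 0 -> F k = 0) ->
  \sum_(k <- msupp g) F k *+ (k == k0) = F k0.
Proof.
move=> F0; have [k0_supp | k0_out] := boolP (k0 \in msupp g).
  rewrite (bigD1_seq k0) ?fset_uniq //= eqxx mulr1n big1 ?addr0 // => k.
  by move/negbTE ->.
rewrite F0 ?mcoeff_outdom // big1_seq // => k /andP[_ k_supp].
by case: eqP k_supp => [-> /(negP k0_out)|].
Qed.

Lemma monalgUZ (T : choiceType) c c' (k : T) : << c * c' *g k >> = c *: << c' *g k >>.
Proof. by apply/malgP => k'; rewrite mcoeffZ !mcoeffU mulrnAr. Qed.

Definition mreindex (h : K -> K') g : {malg R[K']} :=
  \sum_(k <- msupp g) << g@_k *g h k >>.

Variable h : K -> K'.

Lemma mreindexEw (d : {fset K}) g : (msupp g `<=` d)%fset ->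
  mreindex h g = \sum_(k <- d) << g@_k *g h k >>.
Proof.
move=> supp_d; apply: big_fset_incl => // k _ /mcoeff_outdom ->.
exact: monalgU0.
Qed.

Lemma mreindex_is_linear : linear (mreindex h).
Proof.
move=> c g1 g2; pose d := (msupp g1 `|` msupp g2)%fset.
have supp_comb : (msupp (c *: g1 + g2) `<=` d)%fset.
  exact: fsubset_trans (msuppD_le _ _) (fsetSU _ (msuppZ_le _ _)).
rewrite !(@mreindexEw d) ?fsubsetUl ?fsubsetUr // scaler_sumr -big_split /=.
by apply: eq_bigr => k _; rewrite mcoeffD mcoeffZ monalgUD monalgUZ.
Qed.

HB.instance Definition _ := GRing.isLinear.Build R {malg R[K]} {malg R[K']} _
  (mreindex h) mreindex_is_linear.

Lemma mreindexU c k : mreindex h << c *g k >> = << c *g h k >>.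
Proof.
rewrite /mreindex msuppU; case: eqP => [->|_]; first by rewrite big_nil monalgU0.
by rewrite big_seq_fset1 mcoeffUU.
Qed.

Lemma mreindex_coef g x :
  (mreindex h g)@_x = \sum_(k <- msupp g) g@_k *+ (h k == x).
Proof. by rewrite raddf_sum; apply: eq_bigr => k _ /=; rewrite mcoeffU. Qed.

Lemma mreindex_coef_inj g k : injective h -> (mreindex h g)@_(h k) = g@_k.
Proof.
move=> h_inj; rewrite mreindex_coef.
rewrite -[RHS](sum_msupp_pred1 (g := g) (F := mcoeff^~ g)) //.
by apply: eq_bigr => k' _; rewrite (inj_eq h_inj).
Qed.

Lemma mreindex_coef_out g x : (forall k, h k != x) -> (mreindex h g)@_x = 0.
Proof.
by move=> x_out; rewrite mreindex_coef big1 // => k _; rewrite (negbTE (x_out k)).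
Qed.

Lemma mreindex_coef_can (h' : K' -> K) g x :
  cancel h h' -> cancel h' h -> (mreindex h g)@_x = g@_(h' x).
Proof.
by move=> hK h'K; rewrite -[in LHS](h'K x) mreindex_coef_inj //; apply: can_inj hK.
Qed.

End Reindex.

Section LaurentPolynomials.
Variables (C : numClosedFieldType) (n : nat).
Local Notation E := (Exps n).
Local Notation L := (LP C n).
Implicit Types (p q r P : L) (c d : C) (u v x : E).

Lemma lmul_coef p q x :
  (lmul p q)@_x =
  \sum_(u <- msupp p) \sum_(v <- msupp q) (p@_u * q@_v) *+ (u + v == x).
Proof.
rewrite raddf_sum; apply: eq_bigr => u _ /=.
by rewrite raddf_sum; apply: eq_bigr => v _ /=; rewrite mcoeffU.
Qed.

Lemma lmulC : commutative (@lmul C n).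
Proof.
move=> p q; apply/malgP => x; rewrite !lmul_coef exchange_big /=.
by apply: eq_bigr => v _; apply: eq_bigr => u _; rewrite mulrC addrC.
Qed.

Lemma lmul_coefR p q x : (lmul p q)@_x = \sum_(v <- msupp q) p@_(x - v) * q@_v.
Proof.
rewrite lmul_coef exchange_big /=; apply: eq_bigr => v _.
rewrite -(sum_msupp_pred1 (g := p) (F := fun u => p@_u * q@_v)) => [|u ->].
  by apply: eq_bigr => u _; rewrite (eq_sym u) subr_eq eq_sym.
by rewrite mul0r.
Qed.

Lemma lmul_coefL p q x : (lmul p q)@_x = \sum_(u <- msupp p) p@_u * q@_(x - u).
Proof. by rewrite lmulC lmul_coefR; apply: eq_bigr => u _; rewrite mulrC. Qed.

Lemma lmulA : associative (@lmul C n).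
Proof.
move=> p q r; apply/malgP => x; rewrite lmul_coefL lmul_coefR.
under eq_bigr do rewrite lmul_coefR mulr_sumr.
under [RHS]eq_bigr do rewrite lmul_coefL mulr_suml.
rewrite exchange_big /=; apply: eq_bigr => w _; apply: eq_bigr => u _.
by rewrite mulrA addrAC.
Qed.

Lemma lmul1 : left_id (lone C n) (@lmul C n).
Proof.
move=> p; apply/malgP => x.
by rewrite lmul_coefL /lone msuppU oner_eq0 big_seq_fset1 mcoeffUU mul1r subr0.
Qed.

HB.instance Definition _ :=
  Monoid.isComLaw.Build L (lone C n) (@lmul C n) lmulA lmulC lmul1.

Lemma lmulDl p1 p2 q : lmul (p1 + p2) q = lmul p1 q + lmul p2 q.
Proof.
apply/malgP => x; rewrite [RHS]mcoeffD !lmul_coefR -big_split /=.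
by apply: eq_bigr => v _; rewrite mcoeffD mulrDl.
Qed.

Lemma lmul0l q : lmul 0 q = 0.
Proof.
by apply/malgP => x; rewrite lmul_coefR mcoeff0 big1 // => v _; rewrite mcoeff0 mul0r.
Qed.

Lemma lmul_suml (I : Type) (s : seq I) (A : pred I) (F : I -> L) q :
  lmul (\sum_(i <- s | A i) F i) q = \sum_(i <- s | A i) lmul (F i) q.
Proof. exact: (big_morph (fun p => lmul p q) (fun p1 p2 => lmulDl p1 p2 q) (lmul0l q)). Qed.

Lemma lmul_sumr (I : Type) (s : seq I) (A : pred I) (F : I -> L) p :
  lmul p (\sum_(i <- s | A i) F i) = \sum_(i <- s | A i) lmul p (F i).
Proof. by rewrite lmulC lmul_suml; apply: eq_bigr => i _; rewrite lmulC. Qed.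

Lemma lmulUU c d u v : lmul << c *g u >> << d *g v >> = << c * d *g u + v >>.
Proof.
rewrite /lmul !msuppU.
have [->|_] := eqVneq c 0; first by rewrite big_nil mul0r monalgU0.
have [->|_] := eqVneq d 0; first by rewrite big_seq_fset1 big_nil mulr0 monalgU0.
by rewrite !big_seq_fset1 !mcoeffUU.
Qed.

Lemma lmul_coefU p c u x : (lmul p << c *g u >>)@_x = p@_(x - u) * c.
Proof.
rewrite lmul_coefR msuppU; have [->|_] := eqVneq c 0; first by rewrite big_nil mulr0.
by rewrite big_seq_fset1 mcoeffUU.
Qed.

Lemma lstar_coef p x : (lstar p)@_x = (p@_(- x))^*.
Proof.
rewrite raddf_sum -(sum_msupp_pred1 (g := p) (F := fun u => (p@_u)^*)) => [|u ->].
  by apply: eq_bigr => u _ /=; rewrite mcoeffU eqr_oppLR.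
exact: conjC0.
Qed.

Lemma lstar_is_additive : additive (@lstar C n).
Proof.
by move=> p q; apply/malgP => x; rewrite [RHS]mcoeffB !lstar_coef mcoeffB rmorphB.
Qed.

HB.instance Definition _ := GRing.isAdditive.Build L L (@lstar C n) lstar_is_additive.

Lemma lstarU c u : lstar << c *g u >> = << c^* *g - u >>.
Proof. by apply/malgP => x; rewrite lstar_coef !mcoeffU rmorphMn eqr_oppLR eq_sym. Qed.

Lemma cterm_lmul_lstar P (I J : Type) (r : seq I) (s : seq J)
    (A : pred I) (B : pred J) (c : I -> C) (d : J -> C) (u : I -> E) (v : J -> E) :
  cterm (lmul (lmul P (lstar (\sum_(i <- r | A i) << c i *g u i >>)))
              (\sum_(j <- s | B j) << d j *g v j >>)) =
  \sum_(j <- s | B j) \sum_(i <- r | A i) P@_(u i - v j) * (c i)^* * d j.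
Proof.
rewrite [lstar _]raddf_sum lmul_sumr lmul_sumr /cterm raddf_sum.
apply: eq_bigr => j _ /=; rewrite lmul_coefU raddf_sum mulr_suml.
apply: eq_bigr => i _ /=.
by rewrite lstarU lmul_coefU sub0r opprK addrC.
Qed.

Section ExponentReindexing.
Variable h : E -> E.
Hypothesis hD : {morph h : u v / u + v}.

Lemma mreindex_lmul p q :
  mreindex h (lmul p q) = lmul (mreindex h p) (mreindex h q).
Proof.
rewrite [in LHS]/lmul raddf_sum [in RHS]/mreindex lmul_suml.
apply: eq_bigr => u _ /=; rewrite raddf_sum lmul_sumr.
by apply: eq_bigr => v _ /=; rewrite mreindexU lmulUU hD.
Qed.

Lemma mreindex_lone : mreindex h (lone C n) = lone C n.
Proof.
have h0 : h 0 = 0 by apply: (@addrI _ (h 0)); rewrite -hD !addr0.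
by rewrite mreindexU h0.
Qed.

Lemma mreindex_nabla b N :
  mreindex h (nabla C n b N) =
  \big[@lmul C n/lone C n]_(i : 'I_n)
     \big[@lmul C n/lone C n]_(j : 'I_n | i != j) lpow (lone C n - << h (eij N i j) >>) b.
Proof.
rewrite (big_morph _ mreindex_lmul mreindex_lone); apply: eq_bigr => i _.
rewrite (big_morph _ mreindex_lmul mreindex_lone); apply: eq_bigr => j _.
elim: b => [|b IHb] /=; first exact: mreindex_lone.
by rewrite mreindex_lmul IHb raddfB /= mreindex_lone mreindexU.
Qed.

End ExponentReindexing.

Lemma nabla_coefN b N u : (nabla C n b N)@_(- u) = (nabla C n b N)@_u.
Proof.
have eijN i j : - eij N i j = eij N j i.
  by apply/ffunP => k; rewrite !ffunE -mulrN opprB.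
have nablaN : mreindex -%R (nabla C n b N) = nabla C n b N.
  rewrite mreindex_nabla; last exact: opprD.
  under eq_bigr do rewrite big_mkcond.
  rewrite exchange_big /nabla; apply: eq_big => [//|i _]; rewrite [RHS]big_mkcond.
  by apply: eq_big => [//|j _]; rewrite eq_sym eijN.
by rewrite -[in LHS]nablaN mreindex_coef_inj //; apply: oppr_inj.
Qed.

End LaurentPolynomials.

Section Dilation.
Variables (n N : nat).
Hypothesis N_gt0 : (0 < N)%N.

Definition dilate (u : Exps n) : Exps n := [ffun i => N%:Z * u i].

Lemma dilateD : {morph dilate : u v / u + v}.
Proof. by move=> u v; apply/ffunP => i; rewrite !ffunE mulrDr. Qed.

Lemma dilate_inj : injective dilate.
Proof.
have N_neq0 : N%:Z != 0 by rewrite eqz_nat -lt0n.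
move=> u v /ffunP eq_uv; apply/ffunP => i.
by move: (eq_uv i); rewrite !ffunE => /(mulfI N_neq0).
Qed.

Lemma nabla_dilate (C : numClosedFieldType) b :
  mreindex dilate (nabla C n b 1) = nabla C n b N.
Proof.
rewrite mreindex_nabla; last exact: dilateD.
apply: eq_bigr => i _; apply: eq_bigr => j _.
suff -> : dilate (eij 1 i j) = eij N i j by [].
by apply/ffunP => k; rewrite !ffunE mul1r.
Qed.

End Dilation.

Lemma eq_of_dvd_sub_lt (M a a' : nat) (t : int) : (a < M)%N -> (a' < M)%N ->
  a%:Z - a'%:Z = M%:Z * t -> a = a'.
Proof. by move=> *; case: (ltrgtP t 0) => [t_lt0|t_gt0|t0]; [nia | nia | subst t; lia]. Qed.

Section TensorIndices.
Variables (C : numClosedFieldType) (N n : nat).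
Hypothesis N_gt0 : (0 < N)%N.
Local Notation E := (Exps n).
Local Notation T := (TIdx N n).

Definition rho (x : T) : E := [ffun i => (x.2 i : nat)%:Z + 1 - N%:Z * x.1 i].
Definition tau (k : E) : T :=
  ([ffun i => Defs.over N (k i)], [ffun i => uidx N_gt0 (k i)]).

Lemma uidx_val (k : int) : (uidx N_gt0 k : nat)%:Z = ((k - 1) %% N%:Z)%Z.
Proof. by rewrite /= gez0_abs // modz_ge0 // eqz_nat -lt0n. Qed.

Lemma rho_tau : cancel tau rho.
Proof.
move=> k; apply/ffunP => i; rewrite !ffunE uidx_val /Defs.over.
rewrite mulrN opprK; move: (divz_eq (k i - 1) N%:Z).
set q := (_ %/ _)%Z; set r := (_ %% _)%Z => eq_k.
by rewrite -[k i](subrK 1) eq_k; ring.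
Qed.

Lemma tau_rho : cancel rho tau.
Proof.
have N_neq0 : N%:Z != 0 by rewrite eqz_nat -lt0n.
case=> m a; have rho_sub1 i : (rho (m, a)) i - 1 = (- m i) * N%:Z + (a i : nat)%:Z.
  by rewrite ffunE /=; ring.
have a_small i : (0 <= (a i : nat)%:Z < N%:Z) by rewrite ltz_nat ltn_ord.
congr (_, _); apply/ffunP => i; rewrite ffunE.
  by rewrite /Defs.over rho_sub1 divzMDl // divz_small ?addr0 ?opprK.
by apply/val_inj/eqP; rewrite -eqz_nat uidx_val rho_sub1 modzMDl modz_small.
Qed.

Lemma rho_inj : injective rho.
Proof. exact: can_inj tau_rho. Qed.

Lemma nabla_coef_rho b (x y : T) :
  (nabla C n b N)@_(rho x - rho y) =
  if x.2 == y.2 then (nabla C n b 1)@_(x.1 - y.1) else 0.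
Proof.
rewrite -(@nabla_dilate n N); case: eqP => [eq_a | neq_a].
  have -> : rho x - rho y = dilate N (y.1 - x.1).
    by apply/ffunP => i; rewrite !ffunE eq_a; ring.
  rewrite mreindex_coef_inj; last exact: dilate_inj.
  by rewrite -nabla_coefN opprB.
(* [rho x - rho y] is divisible by [N] only if [x.2 = y.2], as [0 <= x.2 i, y.2 i < N]. *)
apply: mreindex_coef_out => w; apply/eqP => /ffunP rho_diff; apply: neq_a.
apply/ffunP => i; apply/val_inj/(@eq_of_dvd_sub_lt N _ _ (w i + x.1 i - y.1 i)).
- exact: ltn_ord.
- exact: ltn_ord.
- by move: (rho_diff i); rewrite !ffunE mulrBr mulrDr => ->; ring.
Qed.

Definition omega_star (f : TV C N n) : LP C n := mreindex rho f.
HB.instance Definition _ := GRing.Linear.copy omega_star (mreindex rho).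

Lemma sp_z_omega_star b (f g : TV C N n) :
  sp_z b f g = sp_x b N (omega_star f) (omega_star g).
Proof.
rewrite /sp_z /sp_x /omega_star /mreindex cterm_lmul_lstar; congr (_ * _).
under eq_bigr do rewrite /torus_int /tcomp cterm_lmul_lstar big_mkcond.
rewrite exchange_big /=; apply: eq_bigr => y _.
rewrite -big_mkcond (big_pred1 y.2) => [|a]; last by rewrite eq_sym.
rewrite [LHS]big_mkcond; apply: eq_bigr => x _.
by rewrite nabla_coef_rho; case: ifP; rewrite ?mul0r.
Qed.
End TensorIndices.

Arguments omega_star {C N n} f.

Section Permutations.
Variable n : nat.
Local Notation E := (Exps n).
Implicit Types (k mu : E) (s t : 'S_n).

Definition permute k s : E := [ffun i => k (s i)].

Lemma permuteM k s t : permute k (s * t)%g = permute (permute k t) s.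
Proof. by apply/ffunP => i; rewrite !ffunE permM. Qed.

Lemma permute1 k : permute k 1%g = k.
Proof. by apply/ffunP => i; rewrite !ffunE perm1. Qed.

Lemma permuteK s : cancel (permute^~ s) (permute^~ s^-1%g).
Proof. by move=> k; rewrite -permuteM mulVg permute1. Qed.

Lemma eq_permute k mu s : (permute k s == mu) = (k == permute mu s^-1%g).
Proof.
apply/eqP/eqP => [<-|->]; first by rewrite permuteK.
by rewrite -permuteM mulgV permute1.
Qed.

Definition strictly_decrb k :=
  [forall i : 'I_n, forall j : 'I_n, (i < j)%N ==> (k j < k i)].

Lemma strictly_decrP k : reflect (strictly_decr k) (strictly_decrb k).
Proof.
apply: (iffP forallP) => [decr i j lt_ij | decr i].
  by move: (decr i) => /forallP /(_ j); rewrite lt_ij.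
by apply/forallP => j; apply/implyP; apply: decr.
Qed.

Definition rank mu i : nat := #|[set l | mu i < mu l]|.

Lemma rank_lt mu i : (rank mu i < n)%N.
Proof.
rewrite -[X in (_ < X)%N]card_ord -cardsT; apply: proper_card.
rewrite properT; apply/negP => /eqP all_gt.
by move: (in_setT i); rewrite -all_gt inE ltxx.
Qed.

Lemma rank_decr mu i j : mu i < mu j -> (rank mu j < rank mu i)%N.
Proof.
move=> lt_ij; apply: proper_card; apply/properP; split.
  by apply/subsetP => l; rewrite !inE => /(lt_trans lt_ij).
by exists j; rewrite !inE ?ltxx.
Qed.

Lemma rank_inj mu : injective mu -> injective (rank mu).
Proof.
move=> mu_inj i j eq_rank; apply: mu_inj.
by case: (ltgtP (mu i) (mu j)) => // /rank_decr; rewrite eq_rank ltnn.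
Qed.

Lemma rank_sorted mu s i : strictly_decrb (permute mu s) -> rank mu (s i) = i.
Proof.
move=> /strictly_decrP decr; rewrite /rank -(card_preimset _ (@perm_inj _ s)).
have -> : s @^-1: [set l | mu (s i) < mu l] = [set l : 'I_n | (l < i)%N].
  apply/setP => l; rewrite !inE; case: (ltngtP l i) => [lt_li | lt_il | /val_inj ->].
  - by move: (decr _ _ lt_li); rewrite !ffunE.
  - by move: (decr _ _ lt_il); rewrite !ffunE => /lt_gtF.
  - exact: ltxx.
rewrite cardsE -sum1_card.
by rewrite (big_ord_narrow (ltnW (ltn_ord i))) sum1_card card_ord.
Qed.

Section Sorting.
Variable mu : E.
Hypothesis mu_inj : injective mu.

Lemma sorting_perm_uniq s t :
  strictly_decrb (permute mu s) -> strictly_decrb (permute mu t) -> s = t.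
Proof.
move=> s_sorts t_sorts; apply/permP => i; apply: (rank_inj mu_inj).
by rewrite !rank_sorted.
Qed.

Lemma sorting_perm_exists : exists s, strictly_decrb (permute mu s).
Proof.
pose rank_ord i : 'I_n := Ordinal (rank_lt mu i).
have rank_ord_inj : injective rank_ord.
  by move=> i j /(congr1 val) /(rank_inj mu_inj).
exists (perm rank_ord_inj)^-1%g; apply/strictly_decrP => i j lt_ij; rewrite !ffunE.
set a := _ i; set b := _ j.
have rank_a : rank mu a = i by rewrite -[in RHS](permKV (perm rank_ord_inj) i) permE.
have rank_b : rank mu b = j by rewrite -[in RHS](permKV (perm rank_ord_inj) j) permE.
case: (ltgtP (mu a) (mu b)) => // [/rank_decr | /mu_inj eq_ab].
  by rewrite rank_a rank_b ltnNge (ltnW lt_ij).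
by move: lt_ij; rewrite -rank_a -rank_b eq_ab ltnn.
Qed.

Lemma count_sorting_perms (R : nzRingType) :
  \sum_(s : 'S_n) (strictly_decrb (permute mu s))%:R = 1 :> R.
Proof.
have [s0 s0_sorts] := sorting_perm_exists.
rewrite (bigD1 s0) //= s0_sorts big1 ?addr0 // => s s_neq.
case: (boolP (strictly_decrb _)) => // s_sorts.
by rewrite (sorting_perm_uniq s_sorts s0_sorts) eqxx in s_neq.
Qed.

End Sorting.

End Permutations.

Section Alternating.
Variables (C : numClosedFieldType) (n : nat).
Local Notation E := (Exps n).
Local Notation L := (LP C n).
Implicit Types (p : L) (k mu : E) (s : 'S_n).

Definition alternating p :=
  forall i j : 'I_n, i != j -> forall mu, p@_(permute mu (tperm i j)) = - p@_mu.

Lemma alternating_coef_perm p mu s :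
  alternating p -> p@_(permute mu s) = (-1) ^+ s * p@_mu.
Proof.
move=> p_alt; case: (prod_tpermP s) => ts -> {s}; elim: ts => [|[i j] ts IHts] /=.
  by rewrite big_nil permute1 odd_perm1 mul1r.
move=> /andP[neq_ij /IHts {}IHts]; rewrite big_cons permuteM p_alt // IHts.
by rewrite odd_mul_tperm neq_ij signr_addb /= expr1 mulN1r mulNr.
Qed.

Lemma alternating_coef_inj p mu : alternating p -> p@_mu != 0 -> injective mu.
Proof.
move=> p_alt p_mu_neq0 i j eq_mu; apply/eqP; apply: contraNT p_mu_neq0 => neq_ij.
have fix_mu : permute mu (tperm i j) = mu.
  by apply/ffunP => l; rewrite ffunE; case: tpermP => [->|->|].
have := p_alt _ _ neq_ij mu; rewrite fix_mu => /eqP.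
by rewrite -addr_eq0 -mulr2n mulrn_eq0.
Qed.

Lemma ahatE k : ahat C k = \sum_(s : 'S_n) (-1) ^+ s *: << permute k s >>.
Proof.
rewrite /ahat [LHS](reindex_inj invg_inj); apply: eq_bigr => s _ /=.
by rewrite odd_permV; congr (_ *: << _ >>); apply/ffunP => i; rewrite !ffunE invgK.
Qed.

Lemma ahat_coef k mu :
  (ahat C k)@_mu = \sum_(s : 'S_n) (-1) ^+ s * (permute k s == mu)%:R.
Proof.
by rewrite ahatE raddf_sum; apply: eq_bigr => s _ /=; rewrite mcoeffZ mcoeffU.
Qed.

Lemma alternating_ahat k : alternating (ahat C k).
Proof.
move=> i j neq_ij mu; rewrite !ahat_coef (reindex_inj (mulgI (tperm i j))) -sumrN.
apply: eq_bigr => s _ /=; rewrite odd_mul_tperm neq_ij signr_addb mulN1r mulNr.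
by rewrite permuteM (inj_eq (can_inj (permuteK _))).
Qed.

Lemma alternating_expansion p :
  alternating p -> p = \sum_(k <- msupp p | strictly_decrb k) p@_k *: ahat C k.
Proof.
move=> p_alt; apply/malgP => mu; rewrite raddf_sum /=.
under eq_bigr do rewrite mcoeffZ ahat_coef mulr_sumr.
rewrite exchange_big /=.
(* For a fixed [s], only [k = permute mu s^-1] contributes. *)
have coef_s s :
    \sum_(k <- msupp p | strictly_decrb k) p@_k * ((-1) ^+ s * (permute k s == mu)%:R)
    = (strictly_decrb (permute mu s^-1%g))%:R * p@_mu.
  pose F k := (strictly_decrb k)%:R * ((-1) ^+ s * p@_k).
  have -> : (strictly_decrb (permute mu s^-1%g))%:R * p@_mu = F (permute mu s^-1%g).
    by rewrite /F alternating_coef_perm // odd_permV signrMK.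
  rewrite big_mkcond -(sum_msupp_pred1 (g := p) (F := F)); last first.
    by move=> k pk0; rewrite /F pk0 !mulr0.
  apply: eq_bigr => k _; rewrite /F eq_permute.
  case: (strictly_decrb k); case: (k == _);
    by rewrite /= ?mulr0 ?mul0r ?mulr1 ?mul1r // mulrC.
under eq_bigr do rewrite coef_s.
have [-> | p_mu_neq0] := eqVneq p@_mu 0; first by rewrite big1 // => s _; rewrite mulr0.
rewrite -mulr_suml (reindex_inj invg_inj) /=.
under eq_bigr do rewrite invgK.
by rewrite count_sorting_perms ?mul1r //; apply: alternating_coef_inj p_mu_neq0.
Qed.

End Alternating.

Section AntisymmetricTensors.
Variables (C : numClosedFieldType) (N n : nat).
Hypothesis N_gt0 : (0 < N)%N.
Local Notation E := (Exps n).
Local Notation T := (TIdx N n).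
Local Notation V := (TV C N n).
Implicit Types (f g : V) (x : T) (k : E).

Definition swap_z (i j : 'I_n) x : T := ([ffun l => x.1 (tperm i j l)], x.2).
Definition swap_v (i j : 'I_n) x : T := (x.1, [ffun l => x.2 (tperm i j l)]).

Lemma swap_zK i j : involutive (swap_z i j).
Proof. by case=> m a; congr (_, _); apply/ffunP => l; rewrite !ffunE tpermK. Qed.

Lemma swap_vK i j : involutive (swap_v i j).
Proof. by case=> m a; congr (_, _); apply/ffunP => l; rewrite !ffunE tpermK. Qed.

Lemma inF_coefP f :
  inF f <-> forall i j, i != j -> forall x, f@_(swap_z i j x) = - f@_(swap_v i j x).
Proof.
have Kop_coef i j x : (Kop i j f)@_x = f@_(swap_z i j x).
  exact: mreindex_coef_can (swap_zK i j) (swap_zK i j).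
have Pop_coef i j x : (Pop i j f)@_x = f@_(swap_v i j x).
  exact: mreindex_coef_can (swap_vK i j) (swap_vK i j).
split=> f_F i j neq_ij; first by move=> x; rewrite -Kop_coef f_F // mcoeffN Pop_coef.
by apply/malgP => x; rewrite Kop_coef mcoeffN Pop_coef f_F.
Qed.

Lemma inF0 : inF (0 : V).
Proof. by apply/inF_coefP => i j _ x; rewrite !mcoeff0 oppr0. Qed.

Lemma inF_linear c f g : inF f -> inF g -> inF (c *: f + g).
Proof.
move=> /inF_coefP f_F /inF_coefP g_F; apply/inF_coefP => i j neq_ij x.
by rewrite !mcoeffD !mcoeffZ f_F // g_F // opprD mulrN.
Qed.

Lemma permute_rho x i j :
  permute (rho x) (tperm i j) = rho (swap_z i j (swap_v i j x)).
Proof. by apply/ffunP => l; rewrite !ffunE. Qed.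

Lemma omega_star_coef f x : (omega_star f)@_(rho x) = f@_x.
Proof. exact/mreindex_coef_inj/rho_inj. Qed.

Lemma inF_alternating f : inF f <-> alternating (omega_star f).
Proof.
rewrite inF_coefP; split=> f_F i j neq_ij.
  move=> mu; rewrite -(rho_tau N_gt0 mu) permute_rho !omega_star_coef.
  by rewrite f_F // swap_vK.
move=> x; have := f_F i j neq_ij (rho (swap_v i j x)).
by rewrite permute_rho swap_vK !omega_star_coef.
Qed.

Lemma omega_star_uhat k : omega_star (uhat C N_gt0 k) = ahat C k.
Proof.
rewrite ahatE /uhat raddf_sum; apply: eq_bigr => s _ /=.
rewrite linearZ /= /omega_star mreindexU.
suff -> : ([ffun i => Defs.over N (k (s i))], [ffun i => uidx N_gt0 (k (s i))]) =
          tau N_gt0 (permute k s) by rewrite rho_tau.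
by congr (_, _); apply/ffunP => i; rewrite !ffunE.
Qed.

Lemma uhat_inF k : inF (uhat C N_gt0 k).
Proof. by apply/inF_alternating; rewrite omega_star_uhat; apply: alternating_ahat. Qed.

Lemma inF_uhat_comb (s : seq E) (c : E -> C) :
  inF (\sum_(k <- s) c k *: uhat C N_gt0 k).
Proof.
elim: s => [|k s IHs]; first by rewrite big_nil; apply: inF0.
by rewrite big_cons; apply: inF_linear (uhat_inF k) IHs.
Qed.

Lemma omega_star_inj : injective (@omega_star C N n).
Proof. by move=> f g eq_fg; apply/malgP => x; rewrite -!omega_star_coef eq_fg. Qed.

Lemma uhat_expansion f : inF f ->
  f = \sum_(k <- msupp (omega_star f) | strictly_decrb k)
        (omega_star f)@_k *: uhat C N_gt0 k.
Proof.
move=> /inF_alternating f_alt; apply: omega_star_inj.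
rewrite [LHS](alternating_expansion f_alt) linear_sum /=.
by apply: eq_bigr => k _; rewrite linearZ /= omega_star_uhat.
Qed.

Section CharacterizedOmega.
Variable omega : V -> LP C n.
Hypothesis omega_linear : forall c f g, inF f -> inF g ->
  omega (c *: f + g) = c *: omega f + omega g.
Hypothesis omega_basis :
  forall k, strictly_decr k -> omega (uhat C N_gt0 k) = ahat C k.

Lemma omega_uhat_comb (s : seq E) (c : E -> C) : all (@strictly_decrb n) s ->
  omega (\sum_(k <- s) c k *: uhat C N_gt0 k) = \sum_(k <- s) c k *: ahat C k.
Proof.
have omega0 : omega 0 = 0.
  have := omega_linear 1 inF0 inF0; rewrite !scale1r !addr0 => omega00.
  by apply: (@addrI _ (omega 0)); rewrite addr0 -omega00.
elim: s => [|k s IHs]; first by rewrite !big_nil omega0.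
move=> /andP[/strictly_decrP k_decr s_decr].
rewrite !big_cons omega_linear; [|exact: uhat_inF|exact: inF_uhat_comb].
by rewrite (IHs s_decr) (omega_basis k_decr).
Qed.

Lemma omega_eq_omega_star f : inF f -> omega f = omega_star f.
Proof.
move=> f_F; rewrite {1}(uhat_expansion f_F) -big_filter.
rewrite omega_uhat_comb ?filter_all //.
by rewrite big_filter -(alternating_expansion (iffLR (inF_alternating f) f_F)).
Qed.

End CharacterizedOmega.

End AntisymmetricTensors.

Theorem lemma4 (C : numClosedFieldType) (N n b : nat)
  (hN : (0 < N)%N) (hn : (0 < n)%N) (hb : (0 < b)%N)
  (omega : TV C N n -> LP C n)
  (omega_linear : forall (c : C) (f g : TV C N n), inF f -> inF g ->
      omega (c *: f + g) = c *: omega f + omega g)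
  (omega_basis : forall k : {ffun 'I_n -> int}, strictly_decr k ->
      omega (uhat C hN k) = ahat C k) :
  forall f g : TV C N n, inF f -> inF g ->
    sp_z b f g = sp_x b N (omega f) (omega g).
Proof.
move=> f g f_F g_F.
rewrite !(omega_eq_omega_star omega_linear omega_basis) //.
exact: sp_z_omega_star.
Qed.
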